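(* For $n=2$ the representation $\theta:FVB_2\to{\rm Aut}(F_4)$ is faithful.
   Context: $FVB_2$ is the group $\langle\sigma_1,\rho_1\mid \sigma_1^2=\rho_1^2=1\rangle$. $F_4$ is free on $x_1,x_2,y_1,y_2$, and $\theta$ is the homomorphism determined by $\theta(\sigma_1):x_1\mapsto x_2y_2,\ x_2\mapsto x_1y_2^{-1},\ y_1\mapsto y_1,\ y_2\mapsto y_2$ and $\theta(\rho_1):x_1\mapsto x_2,\ x_2\mapsto x_1,\ y_1\mapsto y_2,\ y_2\mapsto y_1$. Automorphisms are composed on the right: $(fg)(x)=g(f(x))$. *)

From mathcomp Require Import all_boot.
Set Implicit Arguments. Unset Strict Implicit. Unset Printing Implicit Defensive.

(* Generators are indexed by 'I_4: 0 = x1, 1 = x2, 2 = y1, 3 = y2.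
   A letter (i, true) is the generator i, (i, false) its inverse.
   Elements of F_4 are represented by words; two words denote the same
   element of F_4 iff they have the same free reduction [freduce]. *)
Definition letter := ('I_4 * bool)%type.

Definition inv_letter (a : letter) : letter := (a.1, ~~ a.2).

Definition freduce (w : seq letter) : seq letter :=
  foldr (fun a s => match s with
                    | b :: s' => if b == inv_letter a then s' else a :: s
                    | [::] => [:: a]
                    end) [::] w.

Definition finv (w : seq letter) : seq letter := rev (map inv_letter w).

Definition fsubst (f : 'I_4 -> seq letter) (w : seq letter) : seq letter :=
  freduce (flatten (map (fun a : letter => if a.2 then f a.1 else finv (f a.1)) w)).

Definition gx1 : 'I_4 := @Ordinal 4 0 isT.
Definition gx2 : 'I_4 := @Ordinal 4 1 isT.
Definition gy1 : 'I_4 := @Ordinal 4 2 isT.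
Definition gy2 : 'I_4 := @Ordinal 4 3 isT.

(* Words in the generators: true = sigma_1, false = rho_1 (both involutions,
   so no inverse letters are needed). *)
Definition fvb_word := seq bool.

(* equality in FVB_2: the equivalence relation on words generated by
   deleting a subword  s s  (s = sigma_1 or rho_1), i.e. the relations
   sigma_1^2 = rho_1^2 = 1 of the presentation *)
Inductive fvb_eq : fvb_word -> fvb_word -> Prop :=
| fvb_refl u : fvb_eq u u
| fvb_sym u v : fvb_eq u v -> fvb_eq v u
| fvb_trans u v w : fvb_eq u v -> fvb_eq v w -> fvb_eq u w
| fvb_cancel u v (s : bool) : fvb_eq (u ++ s :: s :: v) (u ++ v).

Definition theta_gen (s : bool) (i : 'I_4) : seq letter :=
  if s then
    match val i with
    | 0 => [:: (gx2, true); (gy2, true)]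
    | 1 => [:: (gx1, true); (gy2, false)]
    | _ => [:: (i, true)]
    end
  else
    match val i with
    | 0 => [:: (gx2, true)]
    | 1 => [:: (gx1, true)]
    | 2 => [:: (gy2, true)]
    | _ => [:: (gy1, true)]
    end.

(* theta extended to words; automorphisms are composed on the right,
   (fg)(x) = g(f(x)), so for w = s_1 s_2 ... s_k,
   theta(w)(x) = theta(s_k)( ... theta(s_1)(x) ...). *)
Definition theta_word (w : fvb_word) (x : seq letter) : seq letter :=
  foldl (fun y s => fsubst (theta_gen s) y) (freduce x) w.

(* Let phi and psi be the homomorphisms F_4 -> Z counting the
   exponent sum of x1 minus that of x2, and the exponent sum of y1 and y2.
   The pair (phi, psi) is theta-equivariant: theta(sigma_1) acts on it by
   (p, t) |-> (-p, t + p) and theta(rho_1) by (p, t) |-> (-p, t).  Every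
   element of FVB_2 is represented by an alternating word in sigma_1, rho_1,
   and the orbit of (phi, psi)(x1) = (1, 0) under these words is injective:
   the alternating word of length n starting with sigma_1 (resp. rho_1)
   sends it to ((-1)^n, ceil(n/2)) (resp. ((-1)^n, -floor(n/2))). *)

From mathcomp Require Import all_boot all_algebra zify.
(* Imported last, so that [finv] is Defs.finv and not fingraph's. *)
From Pilot Require Import Defs.

Set Implicit Arguments. Unset Strict Implicit. Unset Printing Implicit Defensive.

Import GRing.Theory.
Local Open Scope ring_scope.

Definition letter_weight (f : 'I_4 -> int) (a : letter) : int :=
  if a.2 then f a.1 else - f a.1.

Definition expsum (f : 'I_4 -> int) (w : seq letter) : int :=
  \sum_(a <- w) letter_weight f a.

Lemma letter_weight_inv f a : letter_weight f (inv_letter a) = - letter_weight f a.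
Proof. by case: a => i []; rewrite /letter_weight ?opprK. Qed.

Lemma expsum_finv f w : expsum f (finv w) = - expsum f w.
Proof.
rewrite /expsum /finv big_rev big_map -sumrN.
by apply: eq_bigr => a _; rewrite letter_weight_inv.
Qed.

Lemma expsum_freduce f w : expsum f (freduce w) = expsum f w.
Proof.
rewrite /expsum; elim: w => [|a w IHw] //=; rewrite big_cons -IHw.
case: (freduce w) => [|b s] /=; first by rewrite big_seq1 big_nil addr0.
by case: eqP => [->|_]; rewrite !big_cons // (letter_weight_inv f a) addNKr.
Qed.

Lemma expsum_fsubst f g w : expsum f (fsubst g w) = expsum (expsum f \o g) w.
Proof.
rewrite /fsubst expsum_freduce /expsum big_flatten big_map.
by apply: eq_bigr => -[i []] _ //=; rewrite -/(expsum _ _) expsum_finv.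
Qed.

Lemma eq_expsum f g : f =1 g -> expsum f =1 expsum g.
Proof. by move=> fg w; apply: eq_bigr => -[i []] _; rewrite /letter_weight /= fg. Qed.

Lemma expsumN f w : expsum (fun i => - f i) w = - expsum f w.
Proof. by rewrite /expsum -sumrN; apply: eq_bigr => -[i []]. Qed.

Lemma expsumD f g w : expsum (fun i => f i + g i) w = expsum f w + expsum g w.
Proof.
rewrite /expsum -big_split.
by apply: eq_bigr => -[i []] _; rewrite /letter_weight /= ?opprD.
Qed.

Lemma expsumMn f n w : expsum (fun i => f i *+ n) w = expsum f w *+ n.
Proof.
rewrite /expsum -sumrMnl.
by apply: eq_bigr => -[i []] _; rewrite /letter_weight /= ?mulNrn.
Qed.

Definition phi (i : 'I_4) : int :=
  if val i is 0%N then 1 else if val i is 1%N then -1 else 0.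
Definition psi (i : 'I_4) : int := if val i is (0 | 1)%N then 0 else 1.

Definition ab_pair (w : seq letter) : int * int := (expsum phi w, expsum psi w).

Definition ab_act (s : bool) (z : int * int) : int * int := (- z.1, z.2 + z.1 *+ s).

Definition ab_word (u : fvb_word) (z : int * int) : int * int :=
  foldl (fun z s => ab_act s z) z u.

Lemma expsum_phi_theta_gen s : expsum phi \o theta_gen s =1 (fun i => - phi i).
Proof. by case: s => -[[|[|[|[|k]]]] ?] //; rewrite /= /expsum unlock. Qed.

Lemma expsum_psi_theta_gen s :
  expsum psi \o theta_gen s =1 (fun i => psi i + phi i *+ s).
Proof. by case: s => -[[|[|[|[|k]]]] ?] //; rewrite /= /expsum unlock. Qed.

Lemma ab_pair_theta_gen s w : ab_pair (fsubst (theta_gen s) w) = ab_act s (ab_pair w).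
Proof.
rewrite /ab_pair !expsum_fsubst.
rewrite (eq_expsum (expsum_phi_theta_gen s)) (eq_expsum (expsum_psi_theta_gen s)).
by rewrite expsumN expsumD expsumMn.
Qed.

Lemma ab_pair_theta_word u x : ab_pair (theta_word u x) = ab_word u (ab_pair x).
Proof.
rewrite /theta_word /ab_word.
have -> : ab_pair x = ab_pair (freduce x) by rewrite /ab_pair !expsum_freduce.
elim: u (freduce x) => [|s u IHu] y //=.
by rewrite IHu ab_pair_theta_gen.
Qed.

Lemma ab_act_involutive s : involutive (ab_act s).
Proof. by case=> p t; rewrite /ab_act /= opprK mulNrn addrK. Qed.

Lemma ab_word_fvb_eq u v : fvb_eq u v -> ab_word u =1 ab_word v.
Proof.
elim=> {u v} [u | u v _ IH | u v w _ IHuv _ IHvw | u v s] z.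
- by [].
- by rewrite IH.
- by rewrite IHuv IHvw.
- by rewrite /ab_word !foldl_cat /= ab_act_involutive.
Qed.

Fixpoint alt_word (s : bool) (n : nat) : fvb_word :=
  if n is n.+1 then s :: alt_word (~~ s) n else [::].

Lemma fvb_eq_cons s u v : fvb_eq u v -> fvb_eq (s :: u) (s :: v).
Proof.
elim=> {u v} [u | u v _ | u v w _ IHuv _ | u v t].
- exact: fvb_refl.
- exact: fvb_sym.
- exact: fvb_trans.
- exact: (fvb_cancel (s :: u)).
Qed.

Lemma fvb_eq_alt_word w : exists s n, fvb_eq w (alt_word s n).
Proof.
elim: w => [|s w [t [n IHw]]]; first by exists true, 0%N; apply: fvb_refl.
suff [s' [m alt_eq]] : exists s' m, fvb_eq (s :: alt_word t n) (alt_word s' m).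
  by exists s', m; apply: fvb_trans (fvb_eq_cons s IHw) alt_eq.
case: n {IHw} => [|n]; first by exists s, 1%N; apply: fvb_refl.
have [<-|t_neq_s] := eqVneq t s; first by exists (~~ t), n; apply: (fvb_cancel [::]).
by exists s, n.+2; case: s t t_neq_s => [] [] // _; apply: fvb_refl.
Qed.

Definition alt_shift (s : bool) (n : nat) : int :=
  if s then (uphalf n)%:Z else - (n./2)%:Z.

Lemma ab_word_alt_word s n p t :
  ab_word (alt_word s n) (p, t) = ((-1) ^+ n * p, t + p * alt_shift s n).
Proof.
elim: n s p t => [|n IHn] s p t.
  by case: s; rewrite /= /alt_shift mul1r ?oppr0 mulr0 addr0.
rewrite [LHS]IHn /ab_act /=; congr (_, _); first by rewrite exprS mulN1r mulrN mulNr.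
case: s; rewrite /alt_shift /=.
  by rewrite mulrNN mulr1n intS mulrDr mulr1 addrA.
by rewrite mulr0n addr0 mulNr mulrN.
Qed.

Lemma ab_word_alt_word_inj s n s' m :
  ab_word (alt_word s n) (1, 0) = ab_word (alt_word s' m) (1, 0) ->
  alt_word s n = alt_word s' m.
Proof.
rewrite !ab_word_alt_word !mulr1 !mul1r !add0r => -[sign_eq shift_eq].
have odd_eq : odd n = odd m.
  by move: sign_eq; rewrite -signr_odd -[in RHS]signr_odd; case: (odd n); case: (odd m).
case: s s' shift_eq => -[] /=; rewrite /alt_shift => shift_eq.
- by have -> : n = m by lia.
- by have [-> ->] : n = 0 /\ m = 0 by lia.
- by have [-> ->] : n = 0 /\ m = 0 by lia.
- by have -> : n = m by lia.
Qed.

Theorem proposition7 :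
  forall u v : fvb_word,
    (forall x : seq letter, theta_word u x = theta_word v x) ->
    fvb_eq u v.
Proof.
move=> u v theta_uv.
have [s [n u_alt]] := fvb_eq_alt_word u.
have [s' [m v_alt]] := fvb_eq_alt_word v.
have ab_x1 : ab_pair [:: (gx1, true)] = (1, 0) by rewrite /ab_pair /expsum unlock.
have : ab_word u (1, 0) = ab_word v (1, 0).
  by rewrite -ab_x1 -!ab_pair_theta_word theta_uv.
rewrite (ab_word_fvb_eq u_alt) (ab_word_fvb_eq v_alt) => /ab_word_alt_word_inj alt_eq.
by apply: fvb_trans u_alt _; rewrite alt_eq; apply: fvb_sym.
Qed.
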